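(* Let $\Lambda$ be the preprojective algebra of a finite graph $\Gamma$ without loops, and let $q=\bigoplus_{i\in I} q_i^{\oplus a_i}$ with nonnegative integers $a_i$. Let $x$ be a finite-dimensional $\Lambda$-module isomorphic to a submodule of $q$. If $f_1:x\to q$ and $f_2:x\to q$ are two monomorphisms of $\Lambda$-modules, then there exists an automorphism $g:q\to q$ of $\Lambda$-modules such that $f_2=g f_1$.
   Context: $\Gamma$ is a finite unoriented graph without loops (multiple edges allowed) with vertex set $I$; $\Lambda$ is its preprojective algebra over $\mathbb{C}$ (in the sense of Gelfand–Ponomarev). For $i\in I$, $s_i$ is the one-dimensional simple $\Lambda$-module at vertex $i$ and $q_i$ is its injective hull. *)

From mathcomp Require Import all_boot all_algebra.
From mathcomp Require Import reals complex.
Set Implicit Arguments. Unset Strict Implicit. Unset Printing Implicit Defensive.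
Import GRing.Theory.
Local Open Scope ring_scope.

Section Preprojective.
Variables (K : fieldType) (I E : finType) (src tgt : E -> I).
(* The graph Gamma: vertex set I, edge set E; each edge e is given an
   (arbitrary) orientation src e --- tgt e.  Loops are excluded in the theorem
   statement by the hypothesis src e != tgt e. *)

(* Arrows of the double quiver: inl e : src e -> tgt e, inr e : tgt e -> src e. *)
Definition arrow := (E + E)%type.
Definition hsrc (h : arrow) : I := match h with inl e => src e | inr e => tgt e end.
Definition htgt (h : arrow) : I := match h with inl e => tgt e | inr e => src e end.
Definition hbar (h : arrow) : arrow := match h with inl e => inr e | inr e => inl e end.
Definition heps (h : arrow) : K := match h with inl _ => 1 | inr _ => -1 end.

(* A (left) module over Lambda = K Qbar / (sum_h eps(h) h hbar): a K-vector
   space with orthogonal idempotents e_i summing to 1, and arrow operators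
   a_h = e_(htgt h) a_h e_(hsrc h) satisfying the preprojective relation.
   (a_h (a_hbar v) = action of the path "hbar then h".) *)
Record pmod := PMod {
  pcar :> lmodType K;
  pe : I -> pcar -> pcar;
  pa : arrow -> pcar -> pcar;
  pe_lin : forall i, linear (pe i);
  pa_lin : forall h, linear (pa h);
  pe_orth : forall i j v, pe i (pe j v) = if i == j then pe i v else 0;
  pe_sum : forall v, \sum_(i : I) pe i v = v;
  pa_e : forall h v, pa h v = pe (htgt h) (pa h (pe (hsrc h) v));
  pa_rel : forall v, \sum_(h : arrow) heps h *: pa h (pa (hbar h) v) = 0
}.

Definition is_hom (M N : pmod) (f : M -> N) : Prop :=
  [/\ linear f,
      forall i v, f (pe i v) = pe i (f v) &
      forall h v, f (pa h v) = pa h (f v)].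
Definition is_mono (M N : pmod) (f : M -> N) : Prop := is_hom f /\ injective f.
Definition is_auto (M : pmod) (g : M -> M) : Prop := is_hom g /\ bijective g.

Definition injective_module (Q : pmod) : Prop :=
  forall (X Y : pmod) (u : X -> Y) (f : X -> Q),
    is_mono u -> is_hom f ->
    exists g : Y -> Q, is_hom g /\ forall x, g (u x) = f x.

Definition essential_mono (A Q : pmod) (u : A -> Q) : Prop :=
  is_mono u /\
  forall (Y : pmod) (g : Q -> Y), is_hom g -> is_mono (g \o u) -> is_mono g.

Section Simple.
Variable i : I.
Definition s_e (j : I) (v : K^o) : K^o := ((j == i)%:R : K) *: v.
Definition s_a (h : arrow) (v : K^o) : K^o := 0.
Lemma s_e_lin j : linear (s_e j).
Proof. by move=> a u v; rewrite /s_e scalerDr !scalerA mulrC. Qed.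
Lemma s_a_lin h : linear (s_a h).
Proof. by move=> a u v; rewrite /s_a scaler0 addr0. Qed.
Lemma s_e_orth j k v : s_e j (s_e k v) = if j == k then s_e j v else 0.
Proof.
rewrite /s_e scalerA; case: (eqVneq j k) => [->|njk].
  by case: (k == i); rewrite ?mulr1 ?mulr0.
case: (eqVneq j i) => [eji|nji]; case: (eqVneq k i) => [eki|nki] //=;
  rewrite ?mul0r ?mulr0 ?scale0r //.
by move: njk; rewrite eji eki eqxx.
Qed.
Lemma s_e_sum v : \sum_(j : I) s_e j v = v.
Proof.
rewrite (bigD1 i) //= big1 ?addr0 /s_e ?eqxx ?scale1r // => j nji.
by rewrite (negbTE nji) scale0r.
Qed.
Lemma s_a_e h v : s_a h v = s_e (htgt h) (s_a h (s_e (hsrc h) v)).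
Proof. by rewrite /s_a /s_e scaler0. Qed.
Lemma s_a_rel v : \sum_(h : arrow) heps h *: s_a h (s_a (hbar h) v) = 0.
Proof. by rewrite big1 // => h _; rewrite /s_a scaler0. Qed.
Definition simple_mod : pmod :=
  PMod s_e_lin s_a_lin s_e_orth s_e_sum s_a_e s_a_rel.
End Simple.

Definition injective_hull_of_simple (i : I) (Q : pmod) : Prop :=
  injective_module Q /\ exists u : simple_mod i -> Q, essential_mono u.

(* q is a direct sum (biproduct) of the family (Q (tag k))_k, indexed by the
   finite type of pairs k = (i, m) with m < a i, i.e. q = (+)_i Q_i^(+a_i). *)
Definition is_direct_sum (a : I -> nat) (Q : I -> pmod) (q : pmod)
  (inj : forall k : {i : I & 'I_(a i)}, Q (tag k) -> q)
  (proj : forall k : {i : I & 'I_(a i)}, q -> Q (tag k)) : Prop :=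
  [/\ forall k, is_hom (inj k),
      forall k, is_hom (proj k),
      forall k v, proj k (inj k v) = v,
      forall k l v, k != l -> proj l (inj k v) = 0 &
      forall w, \sum_(k : {i : I & 'I_(a i)}) inj k (proj k w) = w].

Definition fin_dim (M : pmod) : Prop :=
  exists (n : nat) (b : 'I_n -> M),
    forall v : M, exists c : 'I_n -> K, v = \sum_(j < n) c j *: b j.

End Preprojective.

From mathcomp Require Import all_boot all_algebra.
From mathcomp Require Import reals complex boolp.
Set Implicit Arguments. Unset Strict Implicit. Unset Printing Implicit Defensive.
Import GRing.Theory.
Local Open Scope ring_scope.

(* The socle of q (the vectors killed by all arrows) is spanned by the images
   z_k of the socles of the summands Q_k, and since each Q_k is an essential
   extension of its socle, a homomorphism out of q that is injective on the
   socle is injective.  The images of two monomorphisms x -> q meet e_i soc(q)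
   in subspaces of the same dimension dim e_i soc(x), so if all the z_k at
   vertex i lie in one image, they lie in the other.  Adjoining missing generators to x as copies
   of simple modules reduces to the case where both images contain the socle of
   q.  Then an extension g of f2 along f1 (q is injective) is injective on the
   socle, hence injective, and so is a retraction r of g, making g bijective.
   This argument works over any field and never uses that x is
   finite-dimensional or that the graph has no loops. *)

Section LinearMaps.
Variables (K : fieldType) (U V : lmodType K) (f : U -> V).
Hypothesis lf : linear f.

Lemma linB u v : f (u - v) = f u - f v.
Proof. exact: zmod_morphism_linear lf u v. Qed.

Lemma lin0 : f 0 = 0.
Proof. by have := linB 0 0; rewrite !subrr. Qed.

Lemma linN u : f (- u) = - f u.
Proof. by rewrite -sub0r linB lin0 sub0r. Qed.

Lemma linD u v : f (u + v) = f u + f v.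
Proof. by have := linB u (- v); rewrite opprK linN opprK. Qed.

Lemma linZ a u : f (a *: u) = a *: f u.
Proof. exact: scalable_linear lf a u. Qed.

Lemma lin_sum (J : Type) (r : seq J) (P : pred J) (F : J -> U) :
  f (\sum_(j <- r | P j) F j) = \sum_(j <- r | P j) f (F j).
Proof. exact: (big_morph f linD lin0). Qed.

Lemma lin_inj : (forall u, f u = 0 -> u = 0) -> injective f.
Proof.
move=> f0 u v fuv; apply/eqP; rewrite -subr_eq0; apply/eqP/f0.
by rewrite linB fuv subrr.
Qed.

End LinearMaps.

Section FreeFamilies.
Variable K : fieldType.

Definition free_family (V : lmodType K) n (b : 'I_n -> V) :=
  forall w : 'I_n -> K, \sum_m w m *: b m = 0 -> forall m, w m = 0.

Lemma free_family_of_image (V W : lmodType K) n (g : V -> W) (y : 'I_n -> V) :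
  linear g -> free_family (g \o y) -> free_family y.
Proof.
move=> lg fy w y0; apply: fy; rewrite -[RHS](lin0 lg) -y0 (lin_sum lg).
by apply: eq_bigr => m _; rewrite (linZ lg).
Qed.

Lemma injective_square_onto (V X : lmodType K) n (b : 'I_n -> V) (y : 'I_n -> X)
    (f : X -> V) (M : 'M[K]_n) :
  linear f -> (forall x, f x = 0 -> x = 0) -> free_family y ->
  (forall m, f (y m) = \sum_l M m l *: b l) -> forall l, exists x, f x = b l.
Proof.
move=> lf f0 fy fyM.
have f_comb (w : 'rV[K]_n) : f (\sum_m w 0 m *: y m) = \sum_l (w *m M) 0 l *: b l.
  rewrite (lin_sum lf); under eq_bigr do rewrite (linZ lf) fyM scaler_sumr.
  rewrite exchange_big /=; apply: eq_bigr => l _.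
  by rewrite mxE scaler_suml; apply: eq_bigr => m _; rewrite scalerA.
have uM : M \in unitmx.
  rewrite unitmxE unitfE; apply/negP => /det0P [v /negP nv vM]; apply: nv.
  apply/eqP/rowP => m; rewrite mxE; apply: fy m; apply: f0.
  by rewrite f_comb vM; apply: big1 => l _; rewrite mxE scale0r.
move=> l; exists (\sum_m (delta_mx (0 : 'I_1) l *m invmx M) 0 m *: y m : X).
rewrite f_comb mulmxKV // (bigD1 l) //= big1 => [|l' nl].
  by rewrite mxE !eqxx scale1r addr0.
by rewrite mxE (negbTE nl) andbF scale0r.
Qed.

End FreeFamilies.

Lemma sum_sigT (V : nmodType) (I : finType) (J : I -> finType) (G : {i : I & J i} -> V) :
  \sum_p G p = \sum_i \sum_(j : J i) G (Tagged J j).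
Proof.
by rewrite (sig_big_dep _ _ (fun i (j : J i) => G (Tagged J j))); apply: eq_bigr => -[].
Qed.

Section Modules.
Variables (K : fieldType) (I E : finType) (src tgt : E -> I).
Notation pm := (pmod K src tgt).
Notation smod := (simple_mod K src tgt).

Lemma hom_lin (M N : pm) (f : M -> N) : is_hom f -> linear f.
Proof. by case. Qed.

Lemma hom_id (M : pm) : is_hom (@id M).
Proof. by []. Qed.

Lemma hom_comp (M N P : pm) (f : M -> N) (g : N -> P) :
  is_hom f -> is_hom g -> is_hom (g \o f).
Proof.
move=> [lf ef af] [lg eg ag]; split=> [c u v|i v|h v] /=.
- by rewrite lf lg.
- by rewrite ef eg.
- by rewrite af ag.
Qed.

Lemma hom_sub (M N : pm) (f g : M -> N) :
  is_hom f -> is_hom g -> is_hom (fun v => f v - g v).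
Proof.
move=> [lf ef af] [lg eg ag]; split=> [c u v|i v|h v] /=.
- by rewrite lf lg scalerBr addrACA opprD.
- by rewrite ef eg (linB (pe_lin i)).
- by rewrite af ag (linB (pa_lin h)).
Qed.

Lemma hom_sum (J : finType) (M N : pm) (F : J -> M -> N) :
  (forall j, is_hom (F j)) -> is_hom (fun v => \sum_j F j v).
Proof.
move=> hF; split=> [c u v|i v|h v] /=.
- rewrite scaler_sumr -big_split; apply: eq_bigr => j _.
  by case: (hF j) => lf _ _; rewrite lf.
- rewrite (lin_sum (pe_lin i)); apply: eq_bigr => j _.
  by case: (hF j) => _ ef _; rewrite ef.
- rewrite (lin_sum (pa_lin h)); apply: eq_bigr => j _.
  by case: (hF j) => _ _ af; rewrite af.
Qed.

Lemma mono_ker (M N : pm) (f : M -> N) : is_mono f -> forall v, f v = 0 -> v = 0.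
Proof. by move=> [[lf _ _] f_inj] v fv; apply: f_inj; rewrite fv (lin0 lf). Qed.

Lemma pe_fixed (M : pm) i j (w : M) :
  pe i w = w -> pe j w = if j == i then w else 0.
Proof. by move=> wi; rewrite -wi pe_orth; case: eqP => // ->. Qed.

Definition in_image (X M : pm) (f : X -> M) (v : M) := exists y, f y = v.

Lemma in_image_sum (X M : pm) (f : X -> M) (J : finType) (F : J -> M) :
  is_hom f -> (forall j, in_image f (F j)) -> in_image f (\sum_j F j).
Proof.
move=> hf /choice [y fy]; exists (\sum_j y j).
by rewrite (lin_sum (hom_lin hf)); apply: eq_bigr => j _.
Qed.

Lemma in_imageZ (X M : pm) (f : X -> M) c v :
  is_hom f -> in_image f v -> in_image f (c *: v).
Proof. by move=> hf [y <-]; exists (c *: y); rewrite (linZ (hom_lin hf)). Qed.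

Definition in_socle (M : pm) (v : M) := forall h, pa h v = 0.

Lemma in_socleB (M : pm) (u v : M) : in_socle u -> in_socle v -> in_socle (u - v).
Proof. by move=> su sv h; rewrite (linB (pa_lin h)) su sv subrr. Qed.

Lemma in_socle_pe (M : pm) i (v : M) : in_socle v -> in_socle (pe i v).
Proof.
move=> sv h; rewrite pa_e pe_orth; case: ifP => _; first by rewrite -pa_e sv.
by rewrite (lin0 (pa_lin h)) (lin0 (pe_lin _)).
Qed.

Lemma hom_in_socle (M N : pm) (f : M -> N) v : is_hom f -> in_socle v -> in_socle (f v).
Proof. by move=> [lf _ af] sv h; rewrite -af sv (lin0 lf). Qed.

Lemma mono_in_socle (M N : pm) (f : M -> N) v : is_mono f -> in_socle (f v) -> in_socle v.
Proof. by move=> mf sfv h; apply: (mono_ker mf); case: mf => -[_ _ ->] _. Qed.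

Section Product.
Variables M N : pm.

Definition prod_pe i (p : M * N) : M * N := (pe i p.1, pe i p.2).
Definition prod_pa h (p : M * N) : M * N := (pa h p.1, pa h p.2).

Lemma prod_pe_lin i : linear (prod_pe i).
Proof. by move=> c u v; rewrite /prod_pe /= !pe_lin. Qed.

Lemma prod_pa_lin h : linear (prod_pa h).
Proof. by move=> c u v; rewrite /prod_pa /= !pa_lin. Qed.

Lemma prod_pe_orth i j p : prod_pe i (prod_pe j p) = if i == j then prod_pe i p else 0.
Proof. by rewrite /prod_pe /= !pe_orth; case: ifP. Qed.

Lemma pair_sum (J : finType) (F : J -> M * N) :
  \sum_j F j = (\sum_j (F j).1, \sum_j (F j).2).
Proof.
rewrite [LHS]surjective_pairing.
by rewrite (big_morph fst (fun _ _ => erefl) erefl) (big_morph snd (fun _ _ => erefl) erefl).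
Qed.

Lemma prod_pe_sum p : \sum_i prod_pe i p = p.
Proof. by rewrite pair_sum /= !pe_sum; case: p. Qed.

Lemma prod_pa_e h p :
  prod_pa h p = prod_pe (htgt src tgt h) (prod_pa h (prod_pe (hsrc src tgt h) p)).
Proof. by rewrite /prod_pa /prod_pe /= -!pa_e. Qed.

Lemma prod_pa_rel p : \sum_h heps K h *: prod_pa h (prod_pa (hbar h) p) = 0.
Proof. by rewrite pair_sum /= !pa_rel. Qed.

Definition prod_mod : pm :=
  PMod prod_pe_lin prod_pa_lin prod_pe_orth prod_pe_sum prod_pa_e prod_pa_rel.

Lemma hom_fst : is_hom (fun p : prod_mod => p.1).
Proof. by []. Qed.

End Product.

Definition adjoin (X M : pm) (f : X -> M) i (w : M) (p : prod_mod X (smod i)) : M :=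
  f p.1 + (p.2 : K) *: w.
#[global] Arguments adjoin [X M] f i w p.

Lemma adjoin_hom (X M : pm) (f : X -> M) i (w : M) :
  is_hom f -> in_socle w -> pe i w = w -> is_hom (adjoin f i w).
Proof.
move=> [lf ef af] sw wi; split=> [c p p'|j p|h p]; rewrite /adjoin /=.
- rewrite lf scalerDr addrACA; congr (_ + _).
  by rewrite scalerDl scalerA.
- rewrite ef (linD (pe_lin j)) (linZ (pe_lin j)) (pe_fixed j wi) /s_e; congr (_ + _).
  by case: (j == i); rewrite ?scale1r ?scale0r ?scaler0.
- by rewrite (linD (pa_lin h)) (linZ (pa_lin h)) sw -af scaler0 /s_a /= scale0r !addr0.
Qed.

Lemma adjoin_mono (X M : pm) (f : X -> M) i (w : M) :
  is_mono f -> in_socle w -> pe i w = w -> ~ in_image f w -> is_mono (adjoin f i w).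
Proof.
move=> [hf f_inj] sw wi nw; have lf := hom_lin hf.
have hfw := adjoin_hom hf sw wi; split=> //; apply: lin_inj (hom_lin hfw) _.
move=> [y c]; rewrite /adjoin /= => fy_cw.
have c0 : c = 0.
  apply: contra_notP nw => /eqP nc; exists (- c^-1 *: y).
  have cw : (c : K) *: w = - f y by apply/eqP; rewrite -addr_eq0 addrC fy_cw.
  by rewrite (linZ lf) scaleNr -scalerN -cw scalerA mulVf ?scale1r.
move: fy_cw; rewrite c0 scale0r addr0 => fy0.
by congr (_, _); apply: f_inj; rewrite fy0 (lin0 lf).
Qed.

Lemma hull_mono_of_socle i (Qm Y : pm) (u : smod i -> Qm) (g : Qm -> Y) :
  essential_mono u -> is_hom g -> (forall v, in_socle v -> g v = 0 -> v = 0) ->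
  is_mono g.
Proof.
move=> [[hu u_inj] ess] hg g0; apply: ess => //; split; first exact: hom_comp.
apply: lin_inj; first exact: hom_lin (hom_comp hu hg).
move=> c guc; apply: u_inj; rewrite (lin0 (hom_lin hu)).
by apply: g0 guc; apply: hom_in_socle.
Qed.

Lemma hull_socle_in_image i (Qm : pm) (u : smod i -> Qm) :
  injective_module Qm -> essential_mono u -> forall v, in_socle v -> in_image u v.
Proof.
move=> injQ eu v sv; have [[hu u_inj] ess] := eu; have lu := hom_lin hu.
rewrite -[v]pe_sum; apply: in_image_sum => // j.
set w := pe j v; have sw : in_socle w := in_socle_pe j sv.
have wj : pe j w = w by rewrite /w pe_orth eqxx.
case: (pselect (in_image u w)) => // nw.
have [g [hg gm]] := injQ _ _ _ _ (adjoin_mono eu.1 sw wj nw) (hom_comp (hom_fst _ _) hu).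
have gu c : g (u c) = u c by move: (gm (c, 0 : K)); rewrite /adjoin /= scale0r addr0.
have g_mono : is_mono g.
  apply: (ess _ _ hg); split; first exact: hom_comp hu hg.
  by move=> c c' /=; rewrite !gu => /u_inj.
exists 0; rewrite (lin0 lu); apply/esym/(mono_ker g_mono).
by move: (gm (0, 1 : K)); rewrite /adjoin /= (lin0 lu) add0r scale1r.
Qed.

End Modules.

Section DirectSum.
Variables (K : fieldType) (I E : finType) (src tgt : E -> I).
Notation pm := (pmod K src tgt).
Notation smod := (simple_mod K src tgt).
Variables (Q : I -> pm) (hQ : forall i, injective_hull_of_simple i (Q i)).
Variables (a : I -> nat) (q : pm).
Notation T := {i : I & 'I_(a i)}.
Variables (inj : forall k : T, Q (tag k) -> q) (proj : forall k : T, q -> Q (tag k)).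
Arguments inj : clear implicits.
Arguments proj : clear implicits.
Hypothesis hq : is_direct_sum inj proj.

Lemma inj_hom k : is_hom (inj k). Proof. by case: hq. Qed.
Lemma proj_hom k : is_hom (proj k). Proof. by case: hq. Qed.
Lemma proj_inj k x : proj k (inj k x) = x. Proof. by case: hq. Qed.
Lemma proj_inj_ne k l x : k != l -> proj l (inj k x) = 0.
Proof. by case: hq => _ _ _ + _; apply. Qed.
Lemma sum_inj_proj v : \sum_k inj k (proj k v) = v. Proof. by case: hq. Qed.

Lemma direct_sum_injective : injective_module q.
Proof.
move=> X Y u f mu hf.
have ext k : exists g : Y -> Q (tag k), is_hom g /\ forall x, g (u x) = proj k (f x).
  exact: (hQ (tag k)).1 X Y u (proj k \o f) mu (hom_comp hf (proj_hom k)).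
pose g k := projT1 (cid (ext k)); have gP k := projT2 (cid (ext k)).
exists (fun y => \sum_k inj k (g k y)); split.
  by apply: hom_sum => k; apply: hom_comp (gP k).1 (inj_hom k).
by move=> x; rewrite -[RHS]sum_inj_proj; apply: eq_bigr => k _; rewrite /g (gP k).2.
Qed.

Definition socle_emb i : smod i -> Q i := projT1 (cid (hQ i).2).
Arguments socle_emb : clear implicits.

Lemma socle_emb_ess i : essential_mono (socle_emb i).
Proof. exact: projT2 (cid (hQ i).2). Qed.

Lemma socle_emb_hom i : is_hom (socle_emb i).
Proof. by case: (socle_emb_ess i) => -[]. Qed.

Lemma socle_embZ i (c : K) : socle_emb i c = c *: socle_emb i 1.
Proof. by rewrite -(linZ (hom_lin (socle_emb_hom i))) /GRing.scale /= mulr1. Qed.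

Definition socle_gen (k : T) : q := inj k (socle_emb (tag k) 1).
Definition socle_gen_at i (m : 'I_(a i)) : q := socle_gen (Tagged (fun j => 'I_(a j)) m).

Lemma in_socle_gen k : in_socle (socle_gen k).
Proof. exact: hom_in_socle (inj_hom k) (hom_in_socle (socle_emb_hom _) _). Qed.

Lemma pe_socle_gen k : pe (tag k) (socle_gen k) = socle_gen k.
Proof.
have [_ ei _] := inj_hom k; have [_ eu _] := socle_emb_hom (tag k).
by rewrite /socle_gen -ei -eu /= /s_e eqxx scale1r.
Qed.

Lemma socle_span v : in_socle v -> exists c : T -> K, v = \sum_k c k *: socle_gen k.
Proof.
move=> sv.
have coef k : exists c : K, proj k v = c *: socle_emb (tag k) 1.
  have [|c <-] := hull_socle_in_image (hQ (tag k)).1 (socle_emb_ess (tag k)) (v := proj k v).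
    exact: hom_in_socle (proj_hom k) sv.
  by exists c; rewrite socle_embZ.
have [c hc] := choice coef; exists c; rewrite -[LHS]sum_inj_proj.
by apply: eq_bigr => k _; rewrite hc (linZ (hom_lin (inj_hom k))).
Qed.

Lemma socle_span_at i v : in_socle v -> pe i v = v ->
  exists c : 'I_(a i) -> K, v = \sum_m c m *: socle_gen_at m.
Proof.
move=> sv vi; have [c vc] := socle_span sv; exists (fun m => c (Tagged _ m)).
rewrite -vi vc (lin_sum (pe_lin i)) sum_sigT (bigD1 i) //= [X in _ + X]big1 ?addr0.
  by apply: eq_bigr => m _; rewrite (linZ (pe_lin i)) (pe_fixed _ (pe_socle_gen _)) eqxx.
move=> j ji; apply: big1 => m _.
by rewrite (linZ (pe_lin i)) (pe_fixed _ (pe_socle_gen _)) eq_sym (negbTE ji) scaler0.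
Qed.

Lemma socle_gen_free i : free_family (@socle_gen_at i).
Proof.
move=> w w0 m; have lp := hom_lin (proj_hom (Tagged _ m)).
move/(congr1 (proj (Tagged _ m))): w0; rewrite (lin_sum lp) (lin0 lp) (bigD1 m) //=.
rewrite big1 => [|l lm]; last by rewrite (linZ lp) proj_inj_ne ?scaler0 // eq_Tagged.
rewrite addr0 (linZ lp) proj_inj -socle_embZ => /eqP.
by rewrite -(lin0 (hom_lin (socle_emb_hom i))) (inj_eq (socle_emb_ess i).1.2) => /eqP.
Qed.

Definition supported (s : seq T) (v : q) := forall l, l \notin s -> proj l v = 0.

Lemma supported_nil v : supported [::] v -> v = 0.
Proof.
move=> sv; rewrite -[v]sum_inj_proj big1 // => l _.
by rewrite sv // (lin0 (hom_lin (inj_hom l))).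
Qed.

Lemma summand_retraction (Y : pm) (g : q -> Y) k :
  is_hom g -> (forall x, in_socle x -> g (inj k x) = 0 -> x = 0) ->
  exists r : Y -> Q (tag k), is_hom r /\ forall x, r (g (inj k x)) = x.
Proof.
move=> hg g0.
have gk_mono := hull_mono_of_socle (socle_emb_ess (tag k)) (hom_comp (inj_hom k) hg) g0.
exact: (hQ (tag k)).1 _ _ _ id gk_mono (hom_id _).
Qed.

Lemma hom_inj_supported (s : seq T) : uniq s ->
  forall (Y : pm) (g : q -> Y), is_hom g ->
  (forall v, in_socle v -> supported s v -> g v = 0 -> v = 0) ->
  forall v, supported s v -> g v = 0 -> v = 0.
Proof.
elim: s => [_ Y g _ _ v sv _|k s IH /= /andP[ks us] Y g hg g0]; first exact: supported_nil.
have li := hom_lin (inj_hom k); have lp l := hom_lin (proj_hom l).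
have supp_inj x : supported (k :: s) (inj k x).
  by move=> l; rewrite inE negb_or eq_sym => /andP[lk _]; rewrite proj_inj_ne.
have [r [hr rg]] : exists r : Y -> Q (tag k), is_hom r /\ forall x, r (g (inj k x)) = x.
  apply: summand_retraction => // x sx gx.
  by rewrite -(proj_inj x) (g0 _ (hom_in_socle (inj_hom k) sx) (supp_inj x) gx) (lin0 (lp k)).
(* [psi] vanishes on the k-th summand, so the induction hypothesis applies to it. *)
pose psi v := g (v - inj k (r (g v))).
have psi0 v : supported s v -> psi v = 0 -> v = 0.
  apply: IH v => // [|v sv sup_v psiv].
    exact: hom_comp (hom_sub (hom_id q) (hom_comp (hom_comp hg hr) (inj_hom k))) hg.
  have v'0 : v - inj k (r (g v)) = 0.
    apply: g0 psiv.
      exact: in_socleB sv (hom_in_socle (inj_hom k) (hom_in_socle hr (hom_in_socle hg sv))).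
    move=> l; rewrite inE negb_or => /andP[lk ls].
    by rewrite (linB (lp l)) sup_v // proj_inj_ne ?subrr // eq_sym.
  have rgv : r (g v) = 0.
    move/(congr1 (proj k)): v'0; rewrite (linB (lp k)) proj_inj sup_v // (lin0 (lp k)).
    by rewrite sub0r => /eqP; rewrite oppr_eq0 => /eqP.
  by move: v'0; rewrite rgv (lin0 li) subr0.
move=> v sv gv; set w := v - inj k (proj k v).
have sw : supported s w.
  move=> l ls; rewrite /w (linB (lp l)); have [->|lk] := eqVneq l k.
    by rewrite proj_inj subrr.
  by rewrite proj_inj_ne 1?eq_sym // subr0 sv // inE negb_or lk.
have rgw : r (g w) = - proj k v.
  by rewrite /w (linB (hom_lin hg)) gv sub0r (linN (hom_lin hr)) rg.
have w0 : w = 0 by apply: psi0 sw _; rewrite /psi rgw (linN li) opprK subrK.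
have vk : v = inj k (proj k v) by apply/eqP; rewrite -subr_eq0 -/w w0.
by rewrite vk -[proj k v]rg -vk gv (lin0 (hom_lin hr)) (lin0 li).
Qed.

Lemma hom_inj_of_socle (Y : pm) (g : q -> Y) :
  is_hom g -> (forall v, in_socle v -> g v = 0 -> v = 0) -> injective g.
Proof.
move=> hg g0; apply: lin_inj (hom_lin hg) _ => v.
apply: (hom_inj_supported (enum_uniq (predT : {pred T})) hg) => // [w sw _|l]; first exact: g0.
by rewrite mem_enum.
Qed.

Definition covers_at (X : pm) (f : X -> q) i := forall m : 'I_(a i), in_image f (socle_gen_at m).

Lemma covers_at_transfer (X : pm) (f1 f2 : X -> q) i :
  is_mono f1 -> is_mono f2 -> covers_at f2 i -> covers_at f1 i.
Proof.
move=> [hf1 f1_inj] [hf2 f2_inj] /choice [y f2y].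
have sy m : in_socle (y m).
  by apply: (mono_in_socle (conj hf2 f2_inj)); rewrite f2y; apply: in_socle_gen.
have yi m : pe i (y m) = y m.
  by apply: f2_inj; case: hf2 => _ -> _; rewrite f2y (pe_socle_gen (Tagged _ m)).
have f1y m : exists c : 'I_(a i) -> K, f1 (y m) = \sum_l c l *: socle_gen_at l.
  by apply: socle_span_at; [apply: hom_in_socle | case: hf1 => _ <- _; rewrite yi].
have [c f1c] := choice f1y.
have y_free : free_family y.
  apply: free_family_of_image (hom_lin hf2) _ => w w0; apply: socle_gen_free.
  by rewrite -[RHS]w0; apply: eq_bigr => m _; rewrite /= f2y.
apply: (injective_square_onto (M := \matrix_(m, l) c m l) (hom_lin hf1) _ y_free).
  exact: mono_ker (conj hf1 f1_inj).
by move=> m; rewrite f1c; apply: eq_bigr => l _; rewrite mxE.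
Qed.

Lemma socle_in_image (X : pm) (f : X -> q) :
  is_hom f -> (forall i, covers_at f i) -> forall v, in_socle v -> in_image f v.
Proof.
move=> hf cov v /socle_span [c ->]; apply: in_image_sum => // -[i m].
exact: in_imageZ (cov i m).
Qed.

Lemma auto_of_covering (X : pm) (f1 f2 : X -> q) : is_mono f1 -> is_mono f2 ->
  (forall i, covers_at f1 i) -> exists g, is_auto g /\ forall v, f2 v = g (f1 v).
Proof.
move=> m1 m2 cov1.
have cov2 i : covers_at f2 i := covers_at_transfer m2 m1 (cov1 i).
have [g [hg gf]] := direct_sum_injective m1 m2.1.
have g_inj : injective g.
  apply: hom_inj_of_socle hg _ => v /(socle_in_image m1.1 cov1) [y <-].
  by rewrite gf => /(mono_ker m2) ->; rewrite (lin0 (hom_lin m1.1)).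
have [r [hr rg]] := direct_sum_injective (conj hg g_inj) (hom_id q).
have r_inj : injective r.
  apply: hom_inj_of_socle hr _ => v /(socle_in_image m2.1 cov2) [y <-].
  by rewrite -{1}gf rg => /(mono_ker m1) ->; rewrite (lin0 (hom_lin m2.1)).
exists g; split=> [|v]; last by rewrite gf.
by split=> //; exists r => [|v]; [exact: rg | apply: r_inj; rewrite rg].
Qed.

Definition uncovered (X : pm) (f : X -> q) := [set k : T | ~~ `[< in_image f (socle_gen k) >]].

Lemma uncovered_adjoin (X : pm) (f : X -> q) i (m : 'I_(a i)) :
  is_hom f -> ~ in_image f (socle_gen_at m) ->
  (#|uncovered (adjoin f i (socle_gen_at m))| < #|uncovered f|)%N.
Proof.
move=> hf nm; apply/proper_card/properP; split.
  apply/subsetP => k; rewrite !inE; apply: contra => /asboolP [y fy]; apply/asboolP.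
  by exists (y, 0 : K); rewrite /adjoin /= scale0r addr0.
exists (Tagged (fun j => 'I_(a j)) m); rewrite !inE; first exact/asboolPn.
rewrite negbK; apply/asboolP; exists (0, 1 : K).
by rewrite /adjoin /= (lin0 (hom_lin hf)) add0r scale1r.
Qed.

Lemma mono_extends_to_auto (X : pm) (f1 f2 : X -> q) : is_mono f1 -> is_mono f2 ->
  exists g, is_auto g /\ forall v, f2 v = g (f1 v).
Proof.
have [n] := ubnP #|uncovered f1|; elim: n X f1 f2 => // n IH X f1 f2 size_f1 m1 m2.
have [cov1|/existsNP [i /existsNP [m nm]]] := pselect (forall i, covers_at f1 i).
  exact: auto_of_covering.
have /existsNP [m' nm'] : ~ covers_at f2 i by move=> /(covers_at_transfer m1 m2) /(_ m).
have ext1 := adjoin_mono m1 (in_socle_gen _) (pe_socle_gen _) nm.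
have ext2 := adjoin_mono m2 (in_socle_gen _) (pe_socle_gen _) nm'.
have [|g [ag g12]] := IH _ _ _ _ ext1 ext2.
  exact: leq_trans (uncovered_adjoin m1.1 nm) size_f1.
by exists g; split=> // v; move: (g12 (v, 0 : K)); rewrite /adjoin /= !scale0r !addr0.
Qed.

End DirectSum.

Unset Implicit Arguments.
Set Strict Implicit.

Theorem mainTheorem1 (R : realType) (I E : finType) (src tgt : E -> I)
    (noloop : forall e, src e != tgt e)
    (Q : I -> pmod R[i] src tgt)
    (hQ : forall i, injective_hull_of_simple i (Q i))
    (a : I -> nat) (q : pmod R[i] src tgt)
    (inj : forall k : {i : I & 'I_(a i)}, Q (tag k) -> q)
    (proj : forall k : {i : I & 'I_(a i)}, q -> Q (tag k))
    (hq : is_direct_sum inj proj)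
    (x : pmod R[i] src tgt) (hx : fin_dim x)
    (hsub : exists f : x -> q, is_mono f)
    (f1 f2 : x -> q) (hf1 : is_mono f1) (hf2 : is_mono f2) :
  exists g : q -> q, is_auto g /\ forall v, f2 v = g (f1 v).
Proof. exact: (mono_extends_to_auto hQ hq hf1 hf2). Qed.
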